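(* For all $n\ge 0$, $$S_n(x)=\frac{1}{2^n}\sum_{k=0}^n\binom{n}{k}\widehat{W}_k(2x)\,\widehat{W}_{n-k}(2x).$$
   Context: For a permutation $\pi$ of $[n]=\{1,\dots,n\}$, ${\rm des}(\pi)=\#\{i\in[n-1]:\pi(i)>\pi(i+1)\}$. A double descent is an index $i\in[n-2]$ with $\pi(i)>\pi(i+1)>\pi(i+2)$. The permutation $\pi$ is simsun if for every $k\in[n]$, the subword of $\pi$ consisting of the letters in $[k]$ (in order of appearance) has no double descents. Let $\mathcal{RS}_n$ be the set of simsun permutations of $[n]$ and $S_n(x)=\sum_{\pi\in\mathcal{RS}_n}x^{{\rm des}(\pi)}$, with $S_0(x)=1$. A left peak of $\pi\in\mathfrak S_n$ is an index $i\in[n-1]$ with $\pi(i-1)<\pi(i)>\pi(i+1)$, where $\pi(0)=0$; ${\rm lpk}(\pi)$ is the number of left peaks, and $\widehat W_n(x)=\sum_{\pi\in\mathfrak S_n}x^{{\rm lpk}(\pi)}$, with $\widehat W_0(x)=1$. *)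

From mathcomp Require Import all_boot all_order all_algebra all_fingroup.
Set Implicit Arguments. Unset Strict Implicit. Unset Printing Implicit Defensive.
Import GRing.Theory.
Local Open Scope ring_scope.

Definition perm_word n (s : 'S_n) : seq nat :=
  [seq (nat_of_ord (s i)).+1 | i <- enum 'I_n].

(* number of descents: #{ i in [1, size-1] : w_i > w_{i+1} } (0-indexed here) *)
Definition des_seq (w : seq nat) : nat :=
  count (fun i => nth 0 w i.+1 < nth 0 w i)%N (iota 0 (size w).-1).

Definition has_ddes (w : seq nat) : bool :=
  has (fun i => (nth 0 w i.+2 < nth 0 w i.+1) && (nth 0 w i.+1 < nth 0 w i))%N
      (iota 0 (size w - 2)).

Definition simsun (w : seq nat) : bool :=
  all (fun k => ~~ has_ddes (filter (fun a => a <= k)%N w)) (iota 1 (size w)).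

(* left peaks: indices i in [n-1] with pi(i-1) < pi(i) > pi(i+1), pi(0) = 0 *)
Definition lpk_seq (w : seq nat) : nat :=
  let w' := 0%N :: w in
  count (fun i => (nth 0 w' i.-1 < nth 0 w' i) && (nth 0 w' i.+1 < nth 0 w' i))%N
        (iota 1 (size w).-1).

Definition S_poly (n : nat) : {poly rat} :=
  \sum_(s : 'S_n | simsun (perm_word s)) 'X^(des_seq (perm_word s)).

Definition What_poly (n : nat) : {poly rat} :=
  \sum_(s : 'S_n) 'X^(lpk_seq (perm_word s)).

From HB Require Import structures.
From mathcomp Require Import all_boot all_order all_algebra all_fingroup.
From mathcomp Require Import zify ring.
Import GRing.Theory.

Set Implicit Arguments.
Unset Strict Implicit.
Unset Printing Implicit Defensive.

(* Inserting the letter n+1 into one of the n+1 slots of a word on [n] raises des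
   (resp. lpk) by at most one.  Sorting the slots by their effect gives
     S_{n+1} = (1 + nx) S_n + x(1-2x) S_n',
     \hat W_{n+1} = (1 + nx) \hat W_n + 2x(1-x) \hat W_n',
   the slots that would create a double descent in a simsun word being exactly those
   followed by a descent.  With L_n p = (1 + nx) p + x(1-2x) p', the substitution x -> 2x
   turns the second recursion into A_{m+1} = 2 L_m A_m - A_m for A_m = \hat W_m(2x), and
   L obeys the Leibniz rule (L_k a) b + a (L_l b) = ab + L_{k+l}(ab).  By Pascal's rule,
   T_n = sum_k C(n,k) A_k A_{n-k} then satisfies T_{n+1} = 2 L_n T_n, so S_n and 2^-n T_n
   follow the same recursion from the same initial value. *)

Local Open Scope nat_scope.

Implicit Types (a p x : nat) (u v w : seq nat).

Definition starts_desc w := if w is x :: y :: _ then y < x else false.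

Fixpoint descents w := if w is _ :: w' then starts_desc w + descents w' else 0.

(* [peaks p w] counts the left peaks of [w] when [w] is preceded by the letter [p]. *)
Definition starts_peak p w := if w is x :: y :: _ then (p < x) && (y < x) else false.

Fixpoint peaks p w := if w is x :: w' then starts_peak p w + peaks x w' else 0.

Definition starts_ddes x w := if w is y :: z :: _ then (z < y) && (y < x) else false.

Fixpoint ddes w := if w is x :: w' then starts_ddes x w' || ddes w' else false.

(* [cut_desc u v] (resp. [cut_peak p u v]) tests whether the last letter of [u] is a
   descent (resp. a left peak, [u] being preceded by [p]) of [u ++ v]. *)
Fixpoint cut_desc u v :=
  if u is x :: u' then (if u' is [::] then starts_desc (x :: v) else cut_desc u' v)
  else false.

Fixpoint cut_peak p u v :=
  if u is x :: u' then (if u' is [::] then starts_peak p (x :: v) else cut_peak x u' v)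
  else false.

Lemma descents_cons x w : descents (x :: w) = starts_desc (x :: w) + descents w.
Proof. by []. Qed.

Lemma peaks_cons p x w : peaks p (x :: w) = starts_peak p (x :: w) + peaks x w.
Proof. by []. Qed.

Lemma descents_cat u v : descents (u ++ v) = descents u + cut_desc u v + descents v.
Proof.
elim: u => [|x [|y u] IH] //.
by rewrite [(x :: _) ++ v]cat_cons descents_cons IH [descents (x :: _)]descents_cons !addnA.
Qed.

Lemma peaks_cat p u v : peaks p (u ++ v) = peaks p u + cut_peak p u v + peaks (last p u) v.
Proof.
elim: u p => [|x [|y u] IH] p //.
by rewrite [(x :: _) ++ v]cat_cons peaks_cons IH [peaks p (x :: _)]peaks_cons !addnA.
Qed.

Lemma cut_desc_nil u : cut_desc u [::] = false.
Proof. by elim: u => [|x [|y u] IH]. Qed.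

Lemma cut_peak_nil p u : cut_peak p u [::] = false.
Proof. by elim: u p => [|x [|y u] IH] p //=; apply: IH. Qed.

Lemma cut_desc_max a u v : all (fun y => y < a) u -> cut_desc u (a :: v) = false.
Proof.
elim: u => [|x [|y u] IH] //=; last by case/andP=> _; apply: IH.
by rewrite andbT => xa; apply/negbTE; rewrite -leqNgt ltnW.
Qed.

Lemma cut_peak_max p a u v : all (fun y => y < a) u -> cut_peak p u (a :: v) = false.
Proof.
elim: u p => [|x [|y u] IH] p //=; last by case/andP=> _; apply: IH.
by case/andP=> xa _; apply/negbTE/negP => /andP[_ ax]; lia.
Qed.

Lemma cut_peak_lt p u v : cut_peak p u v -> head 0 v < last p u.
Proof.
elim: u p => [|x [|y u] IH] p //=; last exact: IH.
by case: v {IH} => [|b v] //= /andP[_ ->].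
Qed.

Lemma ddes_catl u v : ddes u -> ddes (u ++ v).
Proof.
elim: u => [|x u IH] //= /orP[|/IH -> //]; last by rewrite orbT.
by case: u {IH} => [|y [|z u]] //= ->.
Qed.

Lemma ddes_catr u v : ddes v -> ddes (u ++ v).
Proof. by elim: u => [|x u IH] //= /IH ->; rewrite orbT. Qed.

Lemma ddes_cut u v : cut_desc u v -> starts_desc v -> ddes (u ++ v).
Proof.
elim: u => [|x [|y u] IH] //=; last by move=> uv /(IH uv) /= ->; rewrite !orbT.
by case: v {IH} => [|b [|c v]] //= -> ->.
Qed.

Lemma ddes_cat_max a u v : all (fun y => y < a) u -> ~~ ddes u ->
  ddes (u ++ a :: v) = ddes (a :: v).
Proof.
elim: u => [|x u IH] //= /andP[xa ua] /norP[nx nu]; rewrite IH //.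
case: u {IH} ua nx nu => [|y [|z u]] //=; last by move=> _ /negPf ->.
- by case: v => [|z v] //=; rewrite [a < x]ltnNge (ltnW xa) andbF.
- by rewrite andbT => ya _ _; rewrite [a < y]ltnNge (ltnW ya).
Qed.

Lemma ddes_cons_max a v : all (fun y => y < a) v -> ~~ ddes v ->
  ddes (a :: v) = starts_desc v.
Proof.
move=> va /negPf nv; rewrite /= nv orbF.
by case: v va {nv} => [|y [|z v]] //= /andP[-> _]; rewrite andbT.
Qed.

Lemma peaks_cons_max q a v : q < a -> all (fun y => y < a) v ->
  peaks q (a :: v) + starts_peak q v = (v != [::]) + peaks q v.
Proof.
move=> qa; case: v => [|y v] //= /andP[ya _]; rewrite qa ya /=.
case: v => [|z v]; first by rewrite !addn0.
rewrite /= [a < y]ltnNge (ltnW ya) /=; lia.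
Qed.

Lemma sum_drop_nil w : \sum_(i < (size w).+1) (drop i w == [::]) = 1.
Proof. by elim: w => [|x w IH]; rewrite big_ord_recl ?big_ord0 //= IH. Qed.

Lemma sum_starts_desc_drop w : \sum_(i < (size w).+1) starts_desc (drop i w) = descents w.
Proof. by elim: w => [|x w IH]; rewrite big_ord_recl ?big_ord0 //= IH. Qed.

Lemma sum_starts_peak_drop p w :
  \sum_(i < (size w).+1) starts_peak (last p (take i w)) (drop i w) = peaks p w.
Proof. by elim: w p => [|x w IH] p; rewrite big_ord_recl ?big_ord0 //= IH. Qed.

Lemma sum_cut_desc w : \sum_(i < (size w).+1) cut_desc (take i w) (drop i w) = descents w.
Proof.
elim: w => [|x [|y w] IH].
- by rewrite big_ord_recl big_ord0.
- by rewrite !big_ord_recl big_ord0.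
- by rewrite descents_cons -IH big_ord_recl [in LHS]big_ord_recl [in RHS]big_ord_recl.
Qed.

Lemma sum_cut_peak p w :
  \sum_(i < (size w).+1) cut_peak p (take i w) (drop i w) = peaks p w.
Proof.
elim: w p => [|x [|y w] IH] p.
- by rewrite big_ord_recl big_ord0.
- by rewrite !big_ord_recl big_ord0.
- by rewrite peaks_cons -IH big_ord_recl [in LHS]big_ord_recl [in RHS]big_ord_recl.
Qed.

Definition ins a i w := take i w ++ a :: drop i w.

Section MaxInsertion.

Variables (a i : nat) (w : seq nat).
Hypothesis w_lt_a : all (fun y => y < a) w.

Let take_lt_a : all (fun y => y < a) (take i w).
Proof. by move: w_lt_a; rewrite -{1}(cat_take_drop i w) all_cat => /andP[]. Qed.

Let drop_lt_a : all (fun y => y < a) (drop i w).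
Proof. by move: w_lt_a; rewrite -{1}(cat_take_drop i w) all_cat => /andP[]. Qed.

Lemma descents_ins :
  descents (ins a i w) + cut_desc (take i w) (drop i w) = descents w + (drop i w != [::]).
Proof.
rewrite -[X in _ = descents X + _](cat_take_drop i w) /ins !descents_cat cut_desc_max //.
case: (drop i w) drop_lt_a => [|y v] /=; first by rewrite cut_desc_nil !addn0.
by case/andP=> -> _; rewrite -descents_cons; lia.
Qed.

Lemma ddes_ins : ~~ ddes w -> ddes (ins a i w) = starts_desc (drop i w).
Proof.
rewrite -{1}(cat_take_drop i w) => nw.
rewrite ddes_cat_max //; last by apply: contra nw; apply: ddes_catl.
by rewrite ddes_cons_max //; apply: contra nw; apply: ddes_catr.
Qed.

Lemma peaks_ins : 0 < a ->
  peaks 0 (ins a i w) + cut_peak 0 (take i w) (drop i w)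
    + starts_peak (last 0 (take i w)) (drop i w) = peaks 0 w + (drop i w != [::]).
Proof.
move=> a_gt0; rewrite -[X in _ = peaks 0 X + _](cat_take_drop i w) /ins !peaks_cat.
rewrite cut_peak_max // addn0.
have last_lt_a : last 0 (take i w) < a.
  by case/lastP: (take i w) take_lt_a => [|u y] //; rewrite all_rcons last_rcons => /andP[].
have := peaks_cons_max last_lt_a drop_lt_a; lia.
Qed.

End MaxInsertion.

(* The slots where inserting a letter larger than all letters of [w] raises des (resp.
   lpk); for des, the slots that would create a double descent are excluded. *)
Definition new_desc_slot w i : bool :=
  [&& drop i w != [::], ~~ cut_desc (take i w) (drop i w) & ~~ starts_desc (drop i w)].

Definition new_peak_slot w i : bool :=
  [&& drop i w != [::], ~~ cut_peak 0 (take i w) (drop i w)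
    & ~~ starts_peak (last 0 (take i w)) (drop i w)].

Definition new_desc_slots w := \sum_(i < (size w).+1) new_desc_slot w i.

Definition new_peak_slots w := \sum_(i < (size w).+1) new_peak_slot w i.

Lemma desc_slot_partition w i : ~~ ddes w ->
  (drop i w == [::]) + cut_desc (take i w) (drop i w) + starts_desc (drop i w)
    + new_desc_slot w i = 1.
Proof.
move=> nw; rewrite /new_desc_slot.
have excl : cut_desc (take i w) (drop i w) -> ~~ starts_desc (drop i w).
  by move=> c; apply: contra nw => s; rewrite -(cat_take_drop i w) ddes_cut.
case: (drop i w) excl => [|y v]; first by rewrite cut_desc_nil.
by case: cut_desc => [/(_ isT)/negPf -> //|]; case: starts_desc.
Qed.

Lemma peak_slot_partition w i :
  (drop i w == [::]) + cut_peak 0 (take i w) (drop i w)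
    + starts_peak (last 0 (take i w)) (drop i w) + new_peak_slot w i = 1.
Proof.
rewrite /new_peak_slot.
have excl :
    cut_peak 0 (take i w) (drop i w) -> ~~ starts_peak (last 0 (take i w)) (drop i w).
  move=> /cut_peak_lt; case: (drop i w) => [|x [|y v]] //= lt_x.
  by rewrite negb_and -leqNgt (ltnW lt_x).
case: (drop i w) excl => [|y v]; first by rewrite cut_peak_nil.
by case: cut_peak => [/(_ isT)/negPf -> //|]; case: starts_peak.
Qed.

Lemma new_desc_slots_count w : ~~ ddes w -> new_desc_slots w + 2 * descents w = size w.
Proof.
move=> nw; apply: succn_inj.
rewrite -[in RHS](card_ord (size w).+1) -sum1_card.
under [in RHS]eq_bigr => i _ do rewrite -(desc_slot_partition i nw).
rewrite !big_split /= sum_drop_nil sum_cut_desc sum_starts_desc_drop.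
rewrite -/(new_desc_slots w); lia.
Qed.

Lemma new_peak_slots_count w : new_peak_slots w + 2 * peaks 0 w = size w.
Proof.
apply: succn_inj.
rewrite -[in RHS](card_ord (size w).+1) -sum1_card.
under [in RHS]eq_bigr => i _ do rewrite -(peak_slot_partition w i).
rewrite !big_split /= sum_drop_nil sum_cut_peak sum_starts_peak_drop.
rewrite -/(new_peak_slots w); lia.
Qed.

Lemma perm_word_iota n (s : 'S_n) : perm_eq (perm_word s) (iota 1 n).
Proof.
have -> : perm_word s = map (addn 1) (map val (map s (enum 'I_n))).
  by rewrite /perm_word -!map_comp; apply: eq_map => i /=; rewrite add1n.
rewrite -[iota 1 n]/(iota (1 + 0) n) iotaDl; apply: perm_map.
rewrite -val_enum_ord; apply: perm_map.
apply: uniq_perm; [by rewrite (map_inj_uniq (@perm_inj _ s)) enum_uniq | exact: enum_uniq|].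
by move=> x; rewrite mem_enum; apply/mapP; exists (s^-1 x)%g; rewrite ?mem_enum ?permKV.
Qed.

Lemma perm_word_inj n : injective (@perm_word n).
Proof.
move=> s t /eq_in_map st; apply/permP => i.
by have /(_ (mem_enum _ i)) [/val_inj] := st i.
Qed.

Lemma big_perm_word (V : nmodType) n (F : seq nat -> V) :
  (\sum_(s : 'S_n) F (perm_word s) = \sum_(w <- permutations (iota 1 n)) F w)%R.
Proof.
rewrite -big_enum -(big_map (@perm_word n) xpredT); apply: perm_big.
have uniq_words : uniq (map (@perm_word n) (enum 'S_n)).
  by rewrite (map_inj_uniq (@perm_word_inj n)) enum_uniq.
have sub_words : {subset map (@perm_word n) (enum 'S_n) <= permutations (iota 1 n)}.
  by move=> w /mapP[s _ ->]; rewrite mem_permutations perm_word_iota.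
have [|_ eq_words] := uniq_min_size uniq_words sub_words.
  by rewrite size_permutations ?iota_uniq // size_iota size_map -cardE card_Sn.
exact: uniq_perm uniq_words (permutations_uniq _) eq_words.
Qed.

Lemma mem_permutations_iota n w : w \in permutations (iota 1 n) ->
  size w = n /\ all (fun y => y < n.+1) w.
Proof.
rewrite mem_permutations => w_perm; split; first by rewrite (perm_size w_perm) size_iota.
by rewrite (perm_all _ w_perm); apply/allP => y; rewrite mem_iota; lia.
Qed.

Lemma iota1_rcons n : iota 1 n.+1 = rcons (iota 1 n) n.+1.
Proof. by rewrite -cats1 -(addn1 n) iotaD add1n addn1. Qed.

Lemma perm_ins a i w : perm_eq (ins a i w) (a :: w).
Proof. by rewrite /ins -cat1s perm_catCA cat1s cat_take_drop. Qed.

Lemma index_ins a i w : a \notin w -> i <= size w -> index a (ins a i w) = i.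
Proof.
move=> aw iw; rewrite /ins index_cat ifN ?size_takel //= ?eqxx ?addn0 //.
by apply: contra aw; apply: mem_take.
Qed.

Lemma rem_ins a i w : a \notin w -> rem a (ins a i w) = w.
Proof.
move=> aw; have : a \notin take i w by apply: contra aw; apply: mem_take.
rewrite /ins -[RHS](cat_take_drop i w); elim: (take i w) => [|x u IH] /=; first by rewrite eqxx.
by rewrite inE negb_or eq_sym => /andP[/negPf -> /IH ->].
Qed.

Lemma perm_permutations_ins n : perm_eq (permutations (iota 1 n.+1))
  [seq ins n.+1 i w | w <- permutations (iota 1 n), i <- iota 0 n.+1].
Proof.
set L := [seq _ | w <- _, i <- _].
have notin_max w : w \in permutations (iota 1 n) -> n.+1 \notin w.
  by case/mem_permutations_iota => _ wn; apply/negP => /(allP wn); rewrite ltnn.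
have uniq_L : uniq L.
  apply: allpairs_uniq; [exact: permutations_uniq | exact: iota_uniq |].
  move=> [w i] [v j] /allpairsP[[w' i'] [w_perm i_lt [-> ->]]].
  move=> /allpairsP[[v' j'] [v_perm j_lt [-> ->]]] /= eq_ins.
  have {}w_perm : w' \in permutations (iota 1 n) := w_perm.
  have {}v_perm : v' \in permutations (iota 1 n) := v_perm.
  have i_le : i' <= n by move: i_lt; rewrite mem_iota add0n ltnS.
  have j_le : j' <= n by move: j_lt; rewrite mem_iota add0n ltnS.
  have [[w_size _] [v_size _]] :=
    (mem_permutations_iota w_perm, mem_permutations_iota v_perm).
  have := congr1 (index n.+1) eq_ins; have := congr1 (rem n.+1) eq_ins.
  by rewrite !rem_ins ?notin_max // !index_ins ?notin_max ?w_size ?v_size // => -> ->.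
have sub_L : {subset L <= permutations (iota 1 n.+1)}.
  move=> z /allpairsP[[w i] [w_perm _ ->]]; rewrite mem_permutations in w_perm.
  rewrite mem_permutations (permPl (perm_ins _ _ _)) iota1_rcons perm_sym perm_rcons.
  by rewrite perm_cons perm_sym.
have [|_ eq_L] := uniq_min_size uniq_L sub_L.
  by rewrite size_allpairs !size_permutations ?iota_uniq // !size_iota factS mulnC.
by apply: uniq_perm (permutations_uniq _) uniq_L _ => z; rewrite eq_L.
Qed.

Lemma big_permutations_ins (V : nmodType) n (F : seq nat -> V) :
  (\sum_(w <- permutations (iota 1 n.+1)) F w =
   \sum_(w <- permutations (iota 1 n)) \sum_(i < n.+1) F (ins n.+1 i w))%R.
Proof.
rewrite (perm_big _ (perm_permutations_ins n)) big_allpairs_dep /=.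
by apply: eq_bigr => w _; rewrite -(big_mkord xpredT (fun i => F (ins n.+1 i w))).
Qed.

Lemma des_seq_cons x w : des_seq (x :: w) = starts_desc (x :: w) + des_seq w.
Proof.
case: w => [|y w] //; rewrite /des_seq /= -[iota 1 _]/(iota (1 + 0) _) iotaDl count_map.
by congr (_ + _); apply: eq_count.
Qed.

Lemma des_seqE w : des_seq w = descents w.
Proof. by elim: w => [|x w IH] //; rewrite des_seq_cons IH. Qed.

Lemma has_ddes_cons x w : has_ddes (x :: w) = starts_ddes x w || has_ddes w.
Proof.
case: w => [|y [|z w]] //; rewrite /has_ddes /= !subSS subn0.
by rewrite -[iota 1 _]/(iota (1 + 0) _) iotaDl has_map.
Qed.

Lemma has_ddesE w : has_ddes w = ddes w.
Proof. by elim: w => [|x w IH] //; rewrite has_ddes_cons IH. Qed.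

Definition lpk_after p w :=
  count (fun i => (nth 0 (p :: w) i.-1 < nth 0 (p :: w) i)
                  && (nth 0 (p :: w) i.+1 < nth 0 (p :: w) i))
        (iota 1 (size w).-1).

Lemma lpk_afterE p w : lpk_after p w = peaks p w.
Proof.
elim: w p => [|x [|y w] IH] p //; rewrite peaks_cons -IH /lpk_after /=.
rewrite -[iota 2 _]/(iota (1 + 1) _) iotaDl count_map; congr (_ + _).
by apply: eq_in_count => -[|i] //=; rewrite mem_iota.
Qed.

Lemma lpk_seqE w : lpk_seq w = peaks 0 w.
Proof. exact: lpk_afterE. Qed.

Local Open Scope ring_scope.

Section MonomialSums.

Variable R : nzRingType.

Lemma ins_desc_monomial a w i : all (fun y => y < a)%N w -> ~~ ddes w ->
  (if ddes (ins a i w) then 0 else 'X^(descents (ins a i w)) : {poly R}) =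
  'X^(descents w) *+ ((drop i w == [::]) + cut_desc (take i w) (drop i w))%N
  + 'X^((descents w).+1) *+ new_desc_slot w i.
Proof.
move=> wa nw; have P := desc_slot_partition i nw; have E := descents_ins i wa.
rewrite ddes_ins // /new_desc_slot in P *.
case: (drop i w == [::]) P E; case: cut_desc; case: starts_desc => //= P E;
  rewrite ?mulr0n ?mulr1n ?addr0 ?add0r //; congr 'X^_; lia.
Qed.

Lemma ins_peak_monomial a w i : (0 < a)%N -> all (fun y => y < a)%N w ->
  ('X^(peaks 0 (ins a i w)) : {poly R}) =
  'X^(peaks 0 w) *+ ((drop i w == [::]) + cut_peak 0 (take i w) (drop i w)
                      + starts_peak (last 0 (take i w)) (drop i w))%N
  + 'X^((peaks 0 w).+1) *+ new_peak_slot w i.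
Proof.
move=> a_gt0 wa; have P := peak_slot_partition w i; have E := peaks_ins i wa a_gt0.
rewrite /new_peak_slot in P *.
case: (drop i w == [::]) P E; case: cut_peak; case: starts_peak => //= P E;
  rewrite ?mulr0n ?mulr1n ?addr0 ?add0r //; congr 'X^_; lia.
Qed.

Lemma sum_ins_desc_monomial a w : all (fun y => y < a)%N w -> ~~ ddes w ->
  \sum_(i < (size w).+1)
      (if ddes (ins a i w) then 0 else 'X^(descents (ins a i w)) : {poly R})
  = 'X^(descents w) *+ (descents w).+1 + 'X^((descents w).+1) *+ new_desc_slots w.
Proof.
move=> wa nw; under eq_bigr => i _ do rewrite (ins_desc_monomial i wa nw).
by rewrite big_split /= !sumrMnr big_split /= sum_drop_nil sum_cut_desc add1n.
Qed.

Lemma sum_ins_peak_monomial a w : (0 < a)%N -> all (fun y => y < a)%N w ->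
  \sum_(i < (size w).+1) ('X^(peaks 0 (ins a i w)) : {poly R})
  = 'X^(peaks 0 w) *+ (2 * peaks 0 w).+1 + 'X^((peaks 0 w).+1) *+ new_peak_slots w.
Proof.
move=> a_gt0 wa; under eq_bigr => i _ do rewrite (ins_peak_monomial i a_gt0 wa).
rewrite big_split /= !sumrMnr !big_split /= sum_drop_nil sum_cut_peak sum_starts_peak_drop.
by rewrite -addnA addnn -mul2n add1n.
Qed.

End MonomialSums.

Section InsertionOperator.

Variable R : comNzRingType.

Definition insertion_op (r : {poly R}) n (p : {poly R}) :=
  (1 + n%:R * 'X) * p + 'X * r * p^`().

Fact insertion_op_is_semilinear (r : {poly R}) n : semilinear (insertion_op r n).
Proof.
split=> [c p|p q]; rewrite /insertion_op.
  by rewrite derivZ -!scalerAr -scalerDr.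
by rewrite derivD !mulrDr addrACA.
Qed.

HB.instance Definition _ (r : {poly R}) n :=
  GRing.isSemilinear.Build R {poly R} {poly R} _ (insertion_op r n)
    (insertion_op_is_semilinear r n).

Lemma insertion_op_Xn (r : {poly R}) n d :
  insertion_op r n 'X^d = (1 + n%:R * 'X + d%:R * r) * 'X^d.
Proof.
have X_derivXn : 'X * ('X^d)^`() = d%:R * 'X^d :> {poly R}.
  rewrite derivXn; case: d => [|d]; first by rewrite !mulr0n mulr0 mul0r.
  by rewrite mulrnAr -exprS mulr_natl.
by rewrite /insertion_op -mulrA [r * _]mulrC mulrA X_derivXn; ring.
Qed.

End InsertionOperator.

Notation simsun_op := (insertion_op (1 - 2%:R * 'X)).
Notation lpk_op := (insertion_op (2%:R * (1 - 'X))).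

Section Operators.

Variable R : comNzRingType.

Lemma simsun_op_Xn n d c : n = (c + 2 * d)%N ->
  simsun_op n 'X^d = 'X^d *+ d.+1 + 'X^(d.+1) *+ c :> {poly R}.
Proof. by move=> ->; rewrite insertion_op_Xn exprS; move: ('X : {poly R}) => x; ring. Qed.

Lemma lpk_op_Xn n d c : n = (c + 2 * d)%N ->
  lpk_op n 'X^d = 'X^d *+ (2 * d).+1 + 'X^(d.+1) *+ c :> {poly R}.
Proof. by move=> ->; rewrite insertion_op_Xn exprS; move: ('X : {poly R}) => x; ring. Qed.

Lemma simsun_op_mul k l (p q : {poly R}) :
  simsun_op k p * q + p * simsun_op l q = p * q + simsun_op (k + l) (p * q).
Proof. by rewrite /insertion_op derivM natrD; move: ('X : {poly R}) => x; ring. Qed.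

Lemma lpk_op_comp2 n (p : {poly R}) :
  lpk_op n p \Po (2%:R *: 'X) =
  simsun_op n (p \Po (2%:R *: 'X)) *+ 2 - (p \Po (2%:R *: 'X)).
Proof.
rewrite /insertion_op deriv_comp derivZ derivX.
rewrite !(comp_polyB, comp_polyD, comp_polyM, comp_polyX) rmorph1 rmorph_nat !scaler_nat.
by move: ('X : {poly R}) (p \Po _) (p^`() \Po _) => x q q'; ring.
Qed.

End Operators.

Lemma sum_binomial_pascal (V : nmodType) (F : nat -> nat -> V) n :
  \sum_(k < n.+2) F k (n.+1 - k)%N *+ 'C(n.+1, k)
  = \sum_(k < n.+1) (F k.+1 (n - k)%N + F k (n - k).+1) *+ 'C(n, k).
Proof.
rewrite big_ord_recl; under eq_bigr => k _ do rewrite lift0 binS mulrnDr subSS.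
rewrite big_split /=; under [RHS]eq_bigr => k _ do rewrite mulrnDl.
rewrite big_split /= addrA [in RHS]addrC; congr (_ + _).
rewrite [in RHS]big_ord_recl big_ord_recr /= (bin_small (ltnSn n)) mulr0n addr0.
congr (_ + _); first by rewrite !subn0 !bin0.
by apply: eq_bigr => k _; rewrite /bump add1n subnSK.
Qed.

Section BinomialConvolution.

Variables (R : comNzRingType) (f : nat -> {poly R}).

Definition binomial_conv n := \sum_(k < n.+1) f k * f (n - k)%N *+ 'C(n, k).

Hypothesis f_rec : forall m, f m.+1 = simsun_op m (f m) *+ 2 - f m.

Lemma binomial_conv_rec n : binomial_conv n.+1 = simsun_op n (binomial_conv n) *+ 2.
Proof.
rewrite /binomial_conv (sum_binomial_pascal (fun i j => f i * f j)) raddf_sum -sumrMnl.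
apply: eq_bigr => k _; rewrite raddfMn -mulrnAC /=; congr (_ *+ _).
have := simsun_op_mul k (n - k) (f k) (f (n - k)).
rewrite subnKC => [Leibniz|]; last by rewrite -ltnS.
rewrite !f_rec -[simsun_op n _](addKr (f k * f (n - k))) -Leibniz.
have expand (a b p q : {poly R}) :
  (p *+ 2 - a) * b + a * (q *+ 2 - b) = (- (a * b) + (p * b + a * q)) *+ 2 by ring.
exact: expand.
Qed.

End BinomialConvolution.

Lemma S_poly_perms n :
  S_poly n = \sum_(w <- permutations (iota 1 n)) if simsun w then 'X^(descents w) else 0.
Proof.
rewrite /S_poly big_mkcond /=.
rewrite (big_perm_word _ (fun w => if simsun w then 'X^(des_seq w) else 0)).
by apply: eq_bigr => w _; rewrite des_seqE.
Qed.

Lemma What_poly_perms n : What_poly n = \sum_(w <- permutations (iota 1 n)) 'X^(peaks 0 w).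
Proof.
rewrite /What_poly (big_perm_word _ (fun w => 'X^(lpk_seq w))).
by apply: eq_bigr => w _; rewrite lpk_seqE.
Qed.

Lemma S_poly0 : S_poly 0 = 1.
Proof. by rewrite S_poly_perms big_seq1. Qed.

Lemma What_poly0 : What_poly 0 = 1.
Proof. by rewrite What_poly_perms big_seq1. Qed.

Lemma simsun_ins n i w : w \in permutations (iota 1 n) ->
  simsun (ins n.+1 i w) = simsun w && ~~ ddes (ins n.+1 i w).
Proof.
move=> w_perm; have [w_size w_lt] := mem_permutations_iota w_perm.
have ins_size : size (ins n.+1 i w) = n.+1 by rewrite (perm_size (perm_ins _ _ _)) /= w_size.
rewrite /simsun ins_size w_size iota1_rcons all_rcons andbC -has_ddesE.
congr (_ && ~~ has_ddes _).
  apply: eq_in_all => k; rewrite mem_iota => /andP[_ k_le].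
  by rewrite /ins filter_cat /= leqNgt (leq_trans k_le) -?filter_cat ?cat_take_drop.
apply/all_filterP; rewrite (perm_all _ (perm_ins _ _ _)) /= leqnn.
by apply: sub_all w_lt => y /ltnW.
Qed.

Lemma simsun_ddesN n w : w \in permutations (iota 1 n) -> simsun w -> ~~ ddes w.
Proof.
move=> w_perm; have [w_size w_lt] := mem_permutations_iota w_perm.
case: n w_size w_lt {w_perm} => [|n] w_size w_lt; first by case: w w_size {w_lt}.
rewrite /simsun w_size => /allP/(_ n.+1); rewrite mem_iota leqnn -has_ddesE => /(_ isT).
by rewrite (all_filterP _) //; apply: sub_all w_lt => y; rewrite ltnS.
Qed.

Lemma S_poly_rec n : S_poly n.+1 = simsun_op n (S_poly n).
Proof.
rewrite !S_poly_perms big_permutations_ins raddf_sum; apply: eq_big_seq => w w_perm /=.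
have [w_size w_lt] := mem_permutations_iota w_perm.
under eq_bigr => i _ do rewrite (simsun_ins i w_perm).
have [w_simsun|_] := boolP (simsun w); last by rewrite raddf0 big1.
have w_nd := simsun_ddesN w_perm w_simsun.
under eq_bigr => i _ do rewrite /= if_neg.
rewrite -[in LHS]w_size sum_ins_desc_monomial ?w_size //.
by rewrite (@simsun_op_Xn _ _ _ (new_desc_slots w)) // new_desc_slots_count.
Qed.

Lemma What_poly_rec n : What_poly n.+1 = lpk_op n (What_poly n).
Proof.
rewrite !What_poly_perms big_permutations_ins raddf_sum; apply: eq_big_seq => w w_perm /=.
have [w_size w_lt] := mem_permutations_iota w_perm.
rewrite -[in LHS]w_size sum_ins_peak_monomial ?w_size //.
by rewrite (@lpk_op_Xn _ _ _ (new_peak_slots w)) // new_peak_slots_count.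
Qed.

Theorem mainTheorem2 (n : nat) :
  S_poly n =
  ((2 ^+ n)^-1 : rat) *:
    \sum_(k < n.+1)
      ('C(n, k))%:R *:
        ((What_poly k \Po (2%:R *: 'X)) * (What_poly (n - k) \Po (2%:R *: 'X))).
Proof.
pose W2 m := What_poly m \Po (2%:R *: 'X).
have W2_rec m : W2 m.+1 = simsun_op m (W2 m) *+ 2 - W2 m.
  by rewrite /W2 What_poly_rec lpk_op_comp2.
under eq_bigr do rewrite scaler_nat; rewrite -/(binomial_conv W2 n).
elim: n => [|n IH].
  rewrite S_poly0 /binomial_conv big_ord1 /W2 What_poly0 comp_polyC mulr1.
  by rewrite expr0 invr1 scale1r.
rewrite S_poly_rec IH linearZ /= binomial_conv_rec //.
by rewrite -(scaler_nat 2 (simsun_op n _)) scalerA exprS invfM mulrAC mulVf ?mul1r.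
Qed.
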